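(* Let $\Lambda=D+A_n+A_p$ be an $n\times n$ SDD matrix, where $D$ is the diagonal of $\Lambda$, $A_p$ contains all positive off-diagonal entries of $\Lambda$ and $A_n$ contains all negative off-diagonal entries. Let $$S=\begin{pmatrix}D+A_n&-A_p\\-A_p&D+A_n\end{pmatrix},$$ and let $\tilde C$ be a matrix with $\tilde C\tilde C^\top=S^{-1}$. Then the matrix $C=\frac1{\sqrt2}\begin{pmatrix}I_n&-I_n\end{pmatrix}\tilde C$ satisfies $CC^\top=\Lambda^{-1}$.
   Context: SDD: symmetric matrix with $m_{ii}>\sum_{j\ne i}|m_{ij}|$ for all $i$. $I_n$ is the $n\times n$ identity. *)

From HB Require Import structures.
From mathcomp Require Import all_boot all_order all_algebra.
Set Implicit Arguments. Unset Strict Implicit. Unset Printing Implicit Defensive.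
Import Order.TTheory GRing.Theory Num.Theory.
Local Open Scope ring_scope.

Definition SDD (R : numDomainType) (n : nat) (M : 'M[R]_n) : Prop :=
  M^T = M /\ forall i : 'I_n, \sum_(j < n | j != i) `|M i j| < M i i.

Definition diag_part (R : numDomainType) (n : nat) (M : 'M[R]_n) : 'M[R]_n :=
  \matrix_(i, j) (if i == j then M i j else 0).

Definition pos_offdiag (R : numDomainType) (n : nat) (M : 'M[R]_n) : 'M[R]_n :=
  \matrix_(i, j) (if (i != j) && (0 < M i j) then M i j else 0).

Definition neg_offdiag (R : numDomainType) (n : nat) (M : 'M[R]_n) : 'M[R]_n :=
  \matrix_(i, j) (if (i != j) && (M i j < 0) then M i j else 0).

(* With u = (I, -I), the symmetric block structure of S gives u S = (P - Q) u
   for P = D + A_n and Q = -A_p, and P - Q = Lambda, so Lambda^-1 u = u S^-1.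
   Then C C^T = (1/2) u S^-1 u^T = (1/2) Lambda^-1 u u^T = Lambda^-1 since
   u u^T = 2 I.  Invertibility: Lambda is strictly diagonally dominant, and
   det S = det (P + Q) det (P - Q) where P + Q = D + A_n - A_p has the same
   diagonal and off-diagonal moduli as Lambda, hence is dominant as well. *)

From HB Require Import structures.
From mathcomp Require Import all_boot all_order all_algebra.
Set Implicit Arguments.
Unset Strict Implicit.
Unset Printing Implicit Defensive.

Import Order.TTheory GRing.Theory Num.Theory.
Local Open Scope ring_scope.

Lemma det_block_sym (R : comPzRingType) n (P Q : 'M[R]_n) :
  \det (block_mx P Q Q P) = \det (P + Q) * \det (P - Q).
Proof.
have rowops : block_mx 1 1 0 1 *m block_mx P Q Q P *m block_mx 1 (-1) 0 1
              = block_mx (P + Q) 0 Q (P - Q).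
  rewrite !mulmx_block !(mul1mx, mul0mx, mulmx0, mulmx1, mulmxN, addr0, add0r).
  by rewrite (addrC Q P) addNr (addrC (- Q)).
have := congr1 determinant rowops.
by rewrite !det_mulmx !det_ublock det_lblock !det1 !(mul1r, mulr1) => ->.
Qed.

Lemma unitmx_block_sym (R : comUnitRingType) n (P Q : 'M[R]_n) :
  P + Q \in unitmx -> P - Q \in unitmx -> block_mx P Q Q P \in unitmx.
Proof. by rewrite !unitmxE det_block_sym unitrM => -> ->. Qed.

Lemma mul_row_mx1N_block_sym (R : pzRingType) n (P Q : 'M[R]_n) :
  row_mx 1%:M (- 1%:M) *m block_mx P Q Q P = (P - Q) *m row_mx 1%:M (- 1%:M).
Proof.
rewrite mul_row_block mul_mx_row !mul1mx !mulNmx !mul1mx mulmxN mulmx1.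
by rewrite opprB addrC.
Qed.

Lemma mul_row_mx1N_tr (R : pzRingType) n :
  row_mx 1%:M (- 1%:M) *m (row_mx 1%:M (- 1%:M))^T = 2%:M :> 'M[R]_n.
Proof.
by rewrite tr_row_mx mul_row_col linearN /= trmx1 mulmx1 mulNmx mulmxN opprK mulmx1
  -raddfD.
Qed.

Lemma invmx_intertwine (R : comUnitRingType) m n (A : 'M[R]_m) (B : 'M[R]_n)
    (u : 'M[R]_(m, n)) :
  A \in unitmx -> B \in unitmx -> u *m B = A *m u -> invmx A *m u = u *m invmx B.
Proof.
move=> UA UB uB_Au.
by rewrite -{1}(mulmxK UB u) uB_Au !mulmxA mulVmx // mul1mx.
Qed.

(* Levy-Desplanques: a kernel vector is largest at some index m, and row m of
   [A v = 0] then contradicts the dominance of [A m m]. *)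
Lemma row_dominant_unitmx (R : realFieldType) n (A : 'M[R]_n) :
  (forall i, \sum_(j < n | j != i) `|A i j| < `|A i i|) -> A \in unitmx.
Proof.
move=> dom; rewrite unitmxE unitfE -det_tr; apply/negP => /det0P [v v_neq0 vA0].
have [k vk_neq0] : exists k, v 0 k != 0.
  apply/existsP; move: v_neq0; apply: contraR => /existsPn v0.
  by apply/eqP/matrixP => i j; rewrite ord1 mxE; apply/eqP/negbNE/v0.
have [m _ vm_max] := @arg_maxP _ _ _ k xpredT (fun i => `|v 0 i|) isT.
have vm_gt0 : 0 < `|v 0 m| by apply: lt_le_trans (vm_max k isT); rewrite normr_gt0.
have := congr1 (fun w : 'rV[R]_n => w 0 m) vA0; rewrite !mxE (bigD1 m) //= mxE.
move=> /eqP; rewrite addr_eq0 => /eqP vmAmm.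
have : `|v 0 m * A m m| <= `|v 0 m| * \sum_(j < n | j != m) `|A m j|.
  rewrite vmAmm normrN mulr_sumr; apply: le_trans (ler_norm_sum _ _ _) _.
  by apply: ler_sum => i _; rewrite mxE normrM ler_wpM2r //; apply: vm_max.
by rewrite normrM leNgt ltr_pM2l // dom.
Qed.

Definition comparison_mx (R : numDomainType) n (M : 'M[R]_n) : 'M[R]_n :=
  \matrix_(i, j) (if i == j then M i i else - `|M i j|).

Lemma comparison_mx_dominant (R : numDomainType) n (M : 'M[R]_n) :
  (forall i, \sum_(j < n | j != i) `|M i j| < `|M i i|) ->
  forall i, \sum_(j < n | j != i) `|comparison_mx M i j| < `|comparison_mx M i i|.
Proof.
move=> dom i; rewrite mxE eqxx.
by under eq_bigr => j ji do rewrite mxE eq_sym (negbTE ji) normrN normr_id.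
Qed.

Lemma diag_neg_pos_offdiagE (R : realDomainType) n (M : 'M[R]_n) :
  diag_part M + neg_offdiag M + pos_offdiag M = M.
Proof.
apply/matrixP => i j; rewrite !mxE.
have [->|ij] := eqVneq i j; first by rewrite !addr0.
by rewrite add0r /=; case: (ltgtP (M i j) 0) => [_|_|->]; rewrite ?addr0 ?add0r.
Qed.

Lemma diag_neg_pos_offdiagB (R : realDomainType) n (M : 'M[R]_n) :
  diag_part M + neg_offdiag M - pos_offdiag M = comparison_mx M.
Proof.
apply/matrixP => i j; rewrite !mxE.
have [->|ij] := eqVneq i j; first by rewrite !addr0 subr0.
rewrite add0r /=; case: (ltgtP (M i j) 0) => [Mij_lt0|Mij_gt0|->].
- by rewrite subr0 ltr0_norm ?opprK.
- by rewrite sub0r gtr0_norm.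
- by rewrite subr0 normr0 oppr0.
Qed.

Theorem mainTheorem12 (R : rcfType) (n k : nat) (Lambda : 'M[R]_n)
  (Ct : 'M[R]_(n + n, k)) :
  SDD Lambda ->
  let D := diag_part Lambda in
  let Ap := pos_offdiag Lambda in
  let An := neg_offdiag Lambda in
  let S : 'M[R]_(n + n) := block_mx (D + An) (- Ap) (- Ap) (D + An) in
  Ct *m Ct^T = invmx S ->
  let C : 'M[R]_(n, k) :=
    (Num.sqrt 2)^-1 *: (row_mx (1%:M : 'M[R]_n) (- (1%:M : 'M[R]_n)) *m Ct) in
  C *m C^T = invmx Lambda.
Proof.
move=> [_ Lambda_dom] D Ap An S CtCtT C.
have dom i : \sum_(j < n | j != i) `|Lambda i j| < `|Lambda i i|.
  by rewrite ger0_norm ?(le_trans (sumr_ge0 _ _) (ltW (Lambda_dom i))).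
have UL : Lambda \in unitmx by apply: row_dominant_unitmx.
have US : S \in unitmx.
  apply: unitmx_block_sym; rewrite ?opprK ?diag_neg_pos_offdiagE //.
  by rewrite diag_neg_pos_offdiagB; apply/row_dominant_unitmx/comparison_mx_dominant.
set u := row_mx (1%:M : 'M[R]_n) (- 1%:M).
have uS : u *m S = Lambda *m u.
  by rewrite mul_row_mx1N_block_sym opprK diag_neg_pos_offdiagE.
rewrite /C linearZ /= trmx_mul -scalemxAl -scalemxAr scalerA !mulmxA.
rewrite -(mulmxA u) CtCtT -(invmx_intertwine UL US uS) -mulmxA mul_row_mx1N_tr.
rewrite mul_mx_scalar scalerA -invfM -expr2 sqr_sqrtr ?ler0n //.
by rewrite mulVf ?scale1r ?pnatr_eq0.
Qed.
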